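(* Let $G$ be a finite graph and $\kappa$ a positive integer, and for each vertex $u$ let $\mathbb{F}(u)$ be a set of partial colorings of $G$ in each of which $u$ is colored. If every set $\mathbb{F}(u)$ is closed upward, then the set of allowed colorings is closed downward. Consequently, in that case, for any vertex $v$ and any partial coloring $\varphi\in\mathbb{F}(v)$ such that uncoloring $v$ in $\varphi$ yields an allowed coloring, uncoloring any set $S$ of vertices with $v\in S$ yields an allowed coloring.
   Context: A partial coloring of $G$ is a map $\varphi: V(G)\to\{\bullet,1,\dots,\kappa\}$, where $\bullet$ means uncolored. A partial coloring $\varphi$ is allowed if and only if either no vertex is colored, or there exists a colored vertex $v$ with $\varphi\notin\mathbb{F}(v)$ such that the coloring obtained from $\varphi$ by uncoloring $v$ is allowed (recursive definition). A set $X$ of partial colorings is closed upward (resp. closed downward) if, for any partial coloring in $X$, coloring any uncolored vertex with any color (resp. uncoloring any colored vertex) yields a partial coloring in $X$. *)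

From mathcomp Require Import all_boot.
Set Implicit Arguments. Unset Strict Implicit. Unset Printing Implicit Defensive.

(* A partial coloring of a graph on vertex type V with colors 1..k:
   None = uncolored (the bullet), Some c = colored with color c (c : 'I_k). *)
Definition pcoloring (V : finType) (k : nat) := {ffun V -> option 'I_k}.

Section Defs.
Variables (V : finType) (k : nat).
Implicit Types (phi : pcoloring V k) (X : {set pcoloring V k}).

Definition uncolor phi (v : V) : pcoloring V k :=
  [ffun x => if x == v then None else phi x].

Definition uncolor_set phi (S : {set V}) : pcoloring V k :=
  [ffun x => if x \in S then None else phi x].

Definition recolor phi (u : V) (c : 'I_k) : pcoloring V k :=
  [ffun x => if x == u then Some c else phi x].

Definition empty_coloring : pcoloring V k := [ffun _ => None].

Inductive allowed (F : V -> {set pcoloring V k}) : pcoloring V k -> Prop :=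
| allowed_empty : allowed F empty_coloring
| allowed_step phi v :
    phi v != None -> phi \notin F v -> allowed F (uncolor phi v) ->
    allowed F phi.

Definition closed_upward X : Prop :=
  forall phi u (c : 'I_k), phi \in X -> phi u = None -> recolor phi u c \in X.

Definition closed_downward (P : pcoloring V k -> Prop) : Prop :=
  forall phi u, P phi -> phi u != None -> P (uncolor phi u).

End Defs.

From mathcomp Require Import all_boot.

Set Implicit Arguments.
Unset Strict Implicit.
Unset Printing Implicit Defensive.

(* Induct on the derivation of [allowed F phi]: if [phi] was obtained from
   [uncolor phi v] by coloring [v], uncoloring [u != v] first and [v] last
   gives a derivation of [uncolor phi u].  The only thing to check is that
   still [uncolor phi u \notin F v]; otherwise, since [F v] is closed upward,
   coloring [u] back would put [phi] itself into [F v]. *)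

Section Uncoloring.
Variables (V : finType) (k : nat).
Implicit Types (phi : pcoloring V k) (P : pcoloring V k -> Prop) (S : {set V}).

Lemma uncolorC phi u v : uncolor (uncolor phi u) v = uncolor (uncolor phi v) u.
Proof. by apply/ffunP => x; rewrite !ffunE; case: eqP; case: eqP. Qed.

Lemma uncolor_id phi u : phi u = None -> uncolor phi u = phi.
Proof. by move=> phiu; apply/ffunP => x; rewrite ffunE; case: eqP => // ->. Qed.

Lemma recolor_uncolor phi u c : phi u = Some c -> recolor (uncolor phi u) u c = phi.
Proof. by move=> phiu; apply/ffunP => x; rewrite !ffunE; case: eqP => // ->. Qed.

Lemma uncolor_set0 phi : uncolor_set phi set0 = phi.
Proof. by apply/ffunP => x; rewrite ffunE inE. Qed.

Lemma uncolor_setU1 phi u S :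
  uncolor_set phi (u |: S) = uncolor (uncolor_set phi S) u.
Proof. by apply/ffunP => x; rewrite !ffunE in_setU1; case: eqP. Qed.

Lemma uncolor_set_uncolor phi v S :
  v \in S -> uncolor_set (uncolor phi v) S = uncolor_set phi S.
Proof.
move=> vS; apply/ffunP => x; rewrite !ffunE.
by case: ifP => // xNS; case: eqP => // xv; rewrite -xv xNS in vS.
Qed.

Lemma closed_downward_uncolor P phi u :
  closed_downward P -> P phi -> P (uncolor phi u).
Proof.
move=> Pdown Pphi; case phiu: (phi u) => [c|]; last by rewrite uncolor_id.
by apply: Pdown => //; rewrite phiu.
Qed.

Lemma closed_downward_uncolor_set P phi S :
  closed_downward P -> P phi -> P (uncolor_set phi S).
Proof.
move=> Pdown Pphi; rewrite -(set_enum S); elim: (enum S) => [|u s IH].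
  by rewrite set_nil uncolor_set0.
by rewrite set_cons uncolor_setU1; apply: closed_downward_uncolor.
Qed.

Lemma allowed_closed_downward (F : V -> {set pcoloring V k}) :
  (forall u, closed_upward (F u)) -> closed_downward (allowed F).
Proof.
move=> Fup phi u allowed_phi.
elim: allowed_phi u => {phi} [|phi v phiv phiNF allowed_phiv IH] u.
  by rewrite ffunE.
move=> phiu; have [<-|nuv] := eqVneq v u; first exact: allowed_phiv.
have vu : (v == u) = false by apply/negbTE.
apply: (@allowed_step _ _ _ _ v).
- by rewrite ffunE vu.
- apply: contra phiNF; case phiu': (phi u) phiu => [c|] // _ uphiF.
  by rewrite -(recolor_uncolor phiu'); apply: Fup; rewrite // ffunE eqxx.
- by rewrite uncolorC; apply: IH; rewrite ffunE (eq_sym u) vu.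
Qed.

End Uncoloring.

Theorem lemma5 (V : finType) (adj : rel V) (k : nat) (hk : 0 < k)
    (F : V -> {set pcoloring V k})
    (hF : forall u phi, phi \in F u -> phi u != None)
    (hup : forall u, closed_upward (F u)) :
  closed_downward (allowed F) /\
  (forall (v : V) (phi : pcoloring V k), phi \in F v ->
     allowed F (uncolor phi v) ->
     forall S : {set V}, v \in S -> allowed F (uncolor_set phi S)).
Proof.
have Fdown := allowed_closed_downward hup.
split=> // v phi _ allowed_phiv S vS.
rewrite -(uncolor_set_uncolor phi vS).
exact: closed_downward_uncolor_set.
Qed.
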